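(* Let $\mathbf{a},\mathbf{b}\in\mathbb{R}^m$ satisfy $\mathcal{U}^{\mathbf{a},\mathbf{b}}\neq\emptyset$, let $\mathrm{h}^{\mathbf{a},\mathbf{b}}$ be an $\ell$-MRC for $\mathcal{U}^{\mathbf{a},\mathbf{b}}$, and let $\underline{R}^{\,\mathbf{a},\mathbf{b}}_{\ell}$ be the maximum value of the linear program $$\max_{\boldsymbol{\mu},\boldsymbol{\eta},\nu}\ \tfrac{1}{2}(\mathbf{b}+\mathbf{a})^{\mathrm{T}}\boldsymbol{\mu}-\tfrac{1}{2}(\mathbf{b}-\mathbf{a})^{\mathrm{T}}\boldsymbol{\eta}+\nu\ \text{ s.t. } \Phi(x,y)^{\mathrm{T}}\boldsymbol{\mu}+\nu\leq \ell(\mathrm{h}^{\mathbf{a},\mathbf{b}},(x,y))\ \forall x\in\mathcal{X},y\in\mathcal{Y},\ \boldsymbol{\eta}+\boldsymbol{\mu}\succeq\mathbf{0},\ \boldsymbol{\eta}-\boldsymbol{\mu}\succeq\mathbf{0}.$$ If $\mathrm{p}^*\in\mathcal{U}^{\mathbf{a},\mathbf{b}}$, then $$\underline{R}^{\,\mathbf{a},\mathbf{b}}_{\ell}\leq R_\ell(\mathrm{h}^{\mathbf{a},\mathbf{b}})\leq H_\ell(\mathcal{U}^{\mathbf{a},\mathbf{b}}).$$ In addition, $R_\ell(\mathrm{h}^{\mathbf{a},\mathbf{b}})=H_\ell(\mathcal{U}^{\mathbf{a},\mathbf{b}})$ if $\mathrm{p}^*$ maximizes the $\ell$-entropy over $\mathcal{U}^{\mathbf{a},\mathbf{b}}$,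 and $R_\ell(\mathrm{h}^{\mathbf{a},\mathbf{b}})=\underline{R}^{\,\mathbf{a},\mathbf{b}}_{\ell}$ if $\mathrm{p}^*$ minimizes the expected $\ell$-loss of $\mathrm{h}^{\mathbf{a},\mathbf{b}}$ over $\mathcal{U}^{\mathbf{a},\mathbf{b}}$.
   Context: Let $\mathcal{X},\mathcal{Y}$ be finite nonempty sets, $\mathcal{Y}=\{1,\dots,|\mathcal{Y}|\}$; $\Delta(\mathcal{Z})$ is the set of probability distributions on a finite set $\mathcal{Z}$. A classification rule $\mathrm{h}$ assigns to each $x$ a distribution $\mathrm{h}(\cdot|x)\in\Delta(\mathcal{Y})$; $\mathrm{T}(\mathcal{X},\mathcal{Y})$ is the set of such rules. A score function $L:\Delta(\mathcal{Y})\times\mathcal{Y}\to(-\infty,\infty]$ is lower semi-continuous and convex in its first argument; $\ell(\mathrm{h},(x,y))=L(\mathrm{h}(\cdot|x),y)$, $\ell(\mathrm{h},\mathrm{p})=\sum_{x,y}\mathrm{p}(x,y)\ell(\mathrm{h},(x,y))$. $H_\ell(\mathrm{p})=\min_{\mathrm{h}}\ell(\mathrm{h},\mathrm{p})$, $H_\ell(\mathcal{U})=\max_{\mathrm{p}\in\mathcal{U}}H_\ell(\mathrm{p})$; an $\ell$-MRC for convex compact $\mathcal{U}$ is a minimizer over $\mathrm{T}(\mathcal{X},\mathcal{Y})$ of $\max_{\mathrm{p}\in\mathcal{U}}\ell(\mathrm{h},\mathrm{p})$. $\mathrm{p}^*$ is the true underlying distribution and $R_\ell(\mathrm{h})=\ell(\mathrm{h},\mathrm{p}^*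 )$. $\Phi:\mathcal{X}\times\mathcal{Y}\to\mathbb{R}^m$ is a feature mapping, $\preceq,\succeq$ are componentwise, and $\mathcal{U}^{\mathbf{a},\mathbf{b}}=\{\mathrm{p}\in\Delta(\mathcal{X}\times\mathcal{Y}):\mathbf{a}\preceq\mathbb{E}_{\mathrm{p}}\{\Phi(x,y)\}\preceq\mathbf{b}\}$. *)

From HB Require Import structures.
From mathcomp Require Import all_boot all_order all_algebra.
From mathcomp Require Import boolp classical_sets reals ereal.
Set Implicit Arguments. Unset Strict Implicit. Unset Printing Implicit Defensive.
Import Order.TTheory GRing.Theory Num.Theory.
Local Open Scope classical_set_scope.
Local Open Scope ring_scope.

Definition is_dist (R : realType) (Z : finType) (p : Z -> R) : Prop :=
  (forall z, 0 <= p z) /\ \sum_(z : Z) p z = 1.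

Definition is_rule (R : realType) (X Y : finType) (h : X -> Y -> R) : Prop :=
  forall x, is_dist (h x).

(* Score function L : Delta(Y) x Y -> (-oo, +oo], lower semicontinuous and
   convex in its first argument (only values on Delta(Y) matter). *)
Definition score_function (R : realType) (Y : finType)
  (L : (Y -> R) -> Y -> \bar R) : Prop :=
  (forall q y, is_dist q -> L q y != -oo%E) /\
  (* lower semicontinuity on Delta(Y) (sup-norm topology of R^Y) *)
  (forall y q, is_dist q -> forall t : R, (t%:E < L q y)%E ->
     exists2 d : R, 0 < d & forall q', is_dist q' ->
       (forall y', `|q' y' - q y'| < d) -> (t%:E < L q' y)%E) /\
  (forall y q1 q2 (t : R), is_dist q1 -> is_dist q2 -> 0 <= t <= 1 ->
     (L (fun y' => (t * q1 y' + (1 - t) * q2 y')%R) y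
       <= t%:E * L q1 y + (1 - t)%R%:E * L q2 y)%E).

(* ell(h, p) = sum_{x,y} p(x,y) L(h(.|x), y)   (with 0 * +oo = 0) *)
Definition ell (R : realType) (X Y : finType) (L : (Y -> R) -> Y -> \bar R)
  (h : X -> Y -> R) (p : X * Y -> R) : \bar R :=
  (\sum_(z : X * Y) (p z)%:E * L (h z.1) z.2)%E.

(* l-entropy H_l(p) = min_h ell(h,p) (rendered as inf over T(X,Y)) *)
Definition Hent (R : realType) (X Y : finType) (L : (Y -> R) -> Y -> \bar R)
  (p : X * Y -> R) : \bar R :=
  ereal_inf [set ell L h p | h in [set h : X -> Y -> R | is_rule h]].

(* H_l(U) = max_{p in U} H_l(p) (rendered as sup) *)
Definition HentU (R : realType) (X Y : finType) (L : (Y -> R) -> Y -> \bar R)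
  (U : set (X * Y -> R)) : \bar R :=
  ereal_sup [set Hent L p | p in U].

Definition worst (R : realType) (X Y : finType) (L : (Y -> R) -> Y -> \bar R)
  (U : set (X * Y -> R)) (h : X -> Y -> R) : \bar R :=
  ereal_sup [set ell L h p | p in U].

Definition is_MRC (R : realType) (X Y : finType) (L : (Y -> R) -> Y -> \bar R)
  (U : set (X * Y -> R)) (h : X -> Y -> R) : Prop :=
  is_rule h /\ forall h', is_rule h' -> (worst L U h <= worst L U h')%E.

Definition Uab (R : realType) (X Y : finType) (m : nat)
  (Phi : X -> Y -> 'I_m -> R) (a b : 'I_m -> R) : set (X * Y -> R) :=
  [set p | is_dist p /\
     forall i, a i <= \sum_(z : X * Y) p z * Phi z.1 z.2 i <= b i].

Definition lp_feasible (R : realType) (X Y : finType) (m : nat)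
  (Phi : X -> Y -> 'I_m -> R) (L : (Y -> R) -> Y -> \bar R)
  (h : X -> Y -> R) (mu eta : 'I_m -> R) (nu : R) : Prop :=
  (forall x y, ((\sum_(i < m) Phi x y i * mu i + nu)%:E <= L (h x) y)%E) /\
  (forall i, 0 <= eta i + mu i /\ 0 <= eta i - mu i).

Definition lp_obj (R : realType) (m : nat) (a b mu eta : 'I_m -> R) (nu : R)
  : R :=
  2^-1 * (\sum_(i < m) (b i + a i) * mu i)
  - 2^-1 * (\sum_(i < m) (b i - a i) * eta i) + nu.

Definition is_lp_max (R : realType) (X Y : finType) (m : nat)
  (Phi : X -> Y -> 'I_m -> R) (L : (Y -> R) -> Y -> \bar R)
  (h : X -> Y -> R) (a b : 'I_m -> R) (v : R) : Prop :=
  (exists mu eta nu, lp_feasible Phi L h mu eta nu /\ lp_obj a b mu eta nu = v)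
  /\ (forall mu eta nu, lp_feasible Phi L h mu eta nu -> lp_obj a b mu eta nu <= v).

(* Weak LP duality gives Rlow <= R(h): a feasible (mu, eta, nu) has objective at
   most E_p[Phi mu + nu] <= ell(h, p) for every p in U.  The other bounds rest on a
   theorem of alternatives (Fan): if finitely many convex functions on a convex set
   always have a nonnegative member, some fixed convex combination of them is
   nonnegative everywhere.  Applied to the constraints and the objective of the
   program, with the dual variables ranging over their self-dual cone, the weights
   of the combination form a distribution p in U.  This gives LP strong duality,
   min_{p in U} ell(h, p) <= Rlow, and, letting the rule vary as well, the minimax
   inequality max_{p in U} ell(h, p) <= H(U) for the MRC h.  There a rule may be
   infinite where p vanishes, so p is mixed with a distribution of full support in U,
   using that the score is bounded below on the simplex (lower semicontinuity and
   compactness). *)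

From HB Require Import structures.
From mathcomp Require Import all_boot all_order all_algebra.
From mathcomp Require Import boolp classical_sets reals ereal.
From mathcomp Require Import topology normedtype.
From mathcomp Require Import ring lra.
Set Implicit Arguments. Unset Strict Implicit. Unset Printing Implicit Defensive.
Import numFieldTopology.Exports.
Import Order.TTheory GRing.Theory Num.Theory.
Local Open Scope classical_set_scope.
Local Open Scope ring_scope.

Lemma simplex_compact (R : realType) (Y : finType) :
  compact [set q : {ptws Y -> R} | is_dist q].
Proof.
have eval_continuous y : continuous (fun q : {ptws Y -> R} => q y).
  exact: (@proj_continuous Y (fun _ => R) y).
pose A := fun _ : Y => `[(0:R), 1]%classic.
have box : compact [set q : {ptws Y -> R} | forall y, A y (q y)].
  by apply: tychonoff => y; exact: segment_compact.
apply: (subclosed_compact _ box).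
- have -> : [set q : {ptws Y -> R} | is_dist q] =
      \bigcap_(y in setT) [set q : {ptws Y -> R} | 0 <= q y] `&`
      [set q : {ptws Y -> R} | \sum_y q y = 1].
    apply/seteqP; split => [q [q0 q1]|q [/= q0 q1]]; split => // y.
      by move=> _; exact: q0.
    exact: q0 y I.
  apply: closedI.
    apply: closed_bigI => y _.
    exact: (proj1 (continuous_closedP _) (eval_continuous y) _ (@closed_ge R 0)).
  apply: (proj1 (continuous_closedP _) _ _ (@closed_eq R 1)).
  apply: continuous_big => [|y _]; last exact: eval_continuous.
  exact: (@add_continuous R^o).
- move=> q [q0 q1] y; rewrite /A /= in_itv /= q0 /=.
  by rewrite -q1 (bigD1 y) //= lerDl sumr_ge0.
Qed.

Lemma ptws_nbhs_box (R : realType) (Y : finType) (q : {ptws Y -> R}) (d : R) :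
  0 < d -> nbhs q [set q' : {ptws Y -> R} | forall y, `|q' y - q y| < d].
Proof.
move=> d0.
apply: (@filter_forall _ Y (fun y (q' : {ptws Y -> R}) => `|q' y - q y| < d) (nbhs q) _) => y.
apply: (@proj_continuous Y (fun _ => R) y q [set r | `|r - q y| < d]).
by apply/nbhs_ballP; exists d => //= r; rewrite /ball /= distrC.
Qed.

Lemma lsc_simplex_bounded_below (R : realType) (Y : finType) (g : (Y -> R) -> \bar R) :
  (forall q, is_dist q -> g q != -oo%E) ->
  (forall q, is_dist q -> forall t : R, (t%:E < g q)%E ->
     exists2 d : R, 0 < d & forall q', is_dist q' ->
       (forall y, `|q' y - q y| < d) -> (t%:E < g q')%E) ->
  exists B : R, forall q, is_dist q -> (B%:E <= g q)%E.
Proof.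
move=> g_ninfty g_lsc.
pose S (n : nat) := [set q : {ptws Y -> R} | is_dist q /\ (g q < (- n%:R)%:E)%E].
apply: contrapT => /forallNP unbounded.
have S_neq0 n : S n !=set0.
  have /existsNP [q /not_implyP [dq /negP]] := unbounded (- n%:R).
  by rewrite -ltNge => gq; exists q.
pose F : set_system {ptws Y -> R} := filter_from setT S.
have F_filter : Filter F.
  apply: filter_fromT_filter; first by exists 0%N.
  move=> i j; exists (maxn i j) => q [dq gq]; split; split => //;
  apply: (lt_le_trans gq); rewrite lee_fin lerN2 ler_nat ?leq_maxl ?leq_maxr //.
have F_proper : ProperFilter F by apply: filter_from_proper => n _; exact: S_neq0.
have [q0 [dq0 q0F]] : [set q : {ptws Y -> R} | is_dist q] `&` cluster F !=set0.
  by apply: simplex_compact; exists 0%N => // q [].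
have [t gt] : exists t : R, (t%:E < g q0)%E.
  move: (g_ninfty q0 dq0); case: (g q0) => [r _| _ |//].
  - by exists (r - 1); rewrite lte_fin; lra.
  - by exists 0; exact: ltry.
have [d d0 near_q0] := g_lsc q0 dq0 t gt.
pose n := Num.Def.archi_bound `|t|.
have [q [[dq gq] /= q_near]] :=
  q0F _ _ (@in_filter_from _ _ setT S n I) (@ptws_nbhs_box _ _ q0 d d0).
have := lt_trans (near_q0 q dq q_near) gq; rewrite lte_fin.
have : `|t| < n%:R by exact: archi_boundP.
have : - t <= `|t| by rewrite ler_normr lexx orbT.
lra.
Qed.

Lemma sum_merge_pair (R : comPzRingType) (I : finType) (S : {set I}) (i j : I)
    (w G : I -> R) (t : R) : i \in S -> j \in S :\ i ->
  \sum_(k in S) (if k == i then w j * t else if k == j then w j * (1 - t) else w k) * G k =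
  \sum_(k in S :\ i) w k * (if k == j then t * G i + (1 - t) * G j else G k).
Proof.
move=> Si Sj'; have ji : j != i by move: Sj'; rewrite in_setD1 => /andP[].
rewrite (big_setD1 i Si) (big_setD1 j Sj') [in RHS](big_setD1 j Sj').
rewrite /= eqxx (negbTE ji) eqxx addrA; congr (_ + _); first ring.
apply: eq_bigr => k; rewrite !in_setD1 => /and3P[kj ki _].
by rewrite (negbTE ki) (negbTE kj).
Qed.

Section Alternative.
Variables (R : realType) (T : Type) (mix : R -> T -> T -> T).

Definition mix_closed (K : set T) :=
  forall t x y, 0 <= t <= 1 -> K x -> K y -> K (mix t x y).

Definition mix_convex (K : set T) (f : T -> R) :=
  forall t x y, 0 <= t <= 1 -> K x -> K y ->
    f (mix t x y) <= t * f x + (1 - t) * f y.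

Section Two.
Variables (K : set T) (f g : T -> R).
Hypotheses (K_closed : mix_closed K) (f_convex : mix_convex K f)
  (g_convex : mix_convex K g) (fg_cover : forall x, K x -> 0 <= f x \/ 0 <= g x).

Let f_ge0 x : K x -> g x < 0 -> 0 <= f x.
Proof. by move=> Kx gx; case: (fg_cover Kx) => // ?; lra. Qed.

Let g_ge0 x : K x -> f x < 0 -> 0 <= g x.
Proof. by move=> Kx fx; case: (fg_cover Kx) => // ?; lra. Qed.

(* Apply fg_cover at the point of the segment [x1, x2] where the chords of f and g meet. *)
Lemma alternative2_ratio_le x1 x2 : K x1 -> K x2 -> f x1 < 0 -> g x2 < 0 ->
  - g x2 / (f x2 - g x2) <= g x1 / (g x1 - f x1).
Proof.
move=> K1 K2 f1 g2; have g1 := g_ge0 K1 f1; have f2 := f_ge0 K2 g2.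
set u1 := f x1 in f1 g1 *; set v1 := g x1 in g1 *.
set u2 := f x2 in f2 *; set v2 := g x2 in g2 f2 *.
pose D := (u2 - v2) + (v1 - u1).
have D_gt0 : 0 < D by rewrite /D; lra.
pose s := (u2 - v2) / D.
have s01 : 0 <= s <= 1.
  by rewrite divr_ge0 ?ler_pdivrMr ?mul1r /D /=; lra.
have f_mix : s * u1 + (1 - s) * u2 = (v1 * u2 - u1 * v2) / D.
  by rewrite /s /D; field; apply/negP => /eqP; lra.
have g_mix : s * v1 + (1 - s) * v2 = (v1 * u2 - u1 * v2) / D.
  by rewrite /s /D; field; apply/negP => /eqP; lra.
have cross_ge0 : 0 <= v1 * u2 - u1 * v2.
  rewrite -(pmulr_lge0 _ (_ : 0 < D^-1)) ?invr_gt0 //.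
  case: (fg_cover (K_closed s01 K1 K2)) => [fs|gs].
    by rewrite -f_mix (le_trans fs (f_convex s01 K1 K2)).
  by rewrite -g_mix (le_trans gs (g_convex s01 K1 K2)).
rewrite -subr_ge0.
have -> : v1 / (v1 - u1) - - v2 / (u2 - v2) =
    (v1 * u2 - u1 * v2) / ((v1 - u1) * (u2 - v2)).
  by field; apply/andP; split; apply/negP => /eqP; lra.
by rewrite divr_ge0 // mulr_ge0 //; lra.
Qed.

Lemma alternative2 :
  exists2 t, 0 <= t <= 1 & forall x, K x -> 0 <= t * f x + (1 - t) * g x.
Proof.
pose A := [set - g x / (f x - g x) | x in [set x | K x /\ g x < 0]].
have [A0|/set0P [r0 Ar0]] := eqVneq A set0.
  exists 0 => [|x Kx]; first by rewrite lexx ler01.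
  rewrite mul0r add0r subr0 mul1r leNgt; apply/negP => gx.
  have : A (- g x / (f x - g x)) by exists x.
  by rewrite A0.
have A_ub : ubound A 1.
  move=> _ [x [Kx gx] <-]; have := f_ge0 Kx gx.
  by move=> fx; rewrite ler_pdivrMr ?mul1r; lra.
have A_sup : has_sup A by split; [exists r0 | exists 1].
have sup_ge0 : 0 <= sup A.
  apply: le_trans (sup_upper_bound A_sup Ar0).
  by case: Ar0 => x [Kx gx] <-; have := f_ge0 Kx gx => fx; rewrite divr_ge0 //; lra.
have sup_le1 : sup A <= 1 by apply: ge_sup => //; exists r0.
exists (sup A) => [|x Kx]; first by rewrite sup_ge0.
have -> : sup A * f x + (1 - sup A) * g x = g x + sup A * (f x - g x) by ring.
have [gx|gx] := ltP (g x) 0.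
  have fx := f_ge0 Kx gx.
  have : - g x / (f x - g x) * (f x - g x) <= sup A * (f x - g x).
    by rewrite ler_wpM2r ?sup_upper_bound //; [lra | exists x].
  by rewrite divfK //; [lra | apply/negP => /eqP; lra].
have [fx|fx] := ltP (f x) 0.
  have : sup A * (g x - f x) <= g x / (g x - f x) * (g x - f x).
    rewrite ler_wpM2r //; first lra.
    apply: ge_sup; first by exists r0.
    by move=> _ [x2 [K2 g2] <-]; exact: alternative2_ratio_le.
  by rewrite divfK //; [lra | apply/negP => /eqP; lra].
nra.
Qed.

End Two.

Lemma mix_convex_comb (K : set T) (f g : T -> R) (t : R) : 0 <= t <= 1 ->
  mix_convex K f -> mix_convex K g ->
  mix_convex K (fun x => t * f x + (1 - t) * g x).
Proof.
move=> /andP[t0 t1] f_convex g_convex s x y s01 Kx Ky.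
have t1' : 0 <= 1 - t by rewrite subr_ge0.
have := ler_wpM2l t0 (f_convex _ _ _ s01 Kx Ky).
have := ler_wpM2l t1' (g_convex _ _ _ s01 Kx Ky).
lra.
Qed.

Lemma alternative_merge (I : finType) (S : {set I}) i j (f : I -> T -> R) (K : set T)
    (t : R) (lam' : I -> R) :
  i \in S -> j \in S :\ i -> 0 <= t <= 1 ->
  (forall k, 0 <= lam' k) -> \sum_(k in S :\ i) lam' k = 1 ->
  (forall x, K x -> 0 <= \sum_(k in S :\ i)
     lam' k * (if k == j then t * f i x + (1 - t) * f j x else f k x)) ->
  exists lam : I -> R, [/\ forall k, 0 <= lam k, \sum_(k in S) lam k = 1 &
     forall x, K x -> 0 <= \sum_(k in S) lam k * f k x].
Proof.
move=> Si Sj' /andP[t0 t1] lam'_ge0 lam'_sum lam'_cover.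
exists (fun k => if k == i then lam' j * t else if k == j then lam' j * (1 - t) else lam' k).
split.
- move=> k; case: ifP => _; first exact: mulr_ge0.
  by case: ifP => _ //; rewrite mulr_ge0 // subr_ge0.
- rewrite -(eq_bigr _ (fun k _ => mulr1 _)).
  have /= -> := sum_merge_pair lam' (fun=> 1) t Si Sj'.
  rewrite -[RHS]lam'_sum.
  by apply: eq_bigr => k _; case: ifP => _; rewrite ?mulr1 // subrKC mulr1.
- by move=> x Kx; rewrite (sum_merge_pair _ (fun k => f k x) _ Si Sj'); exact: lam'_cover.
Qed.

(* By induction on #|S|: alternative2, applied where all members of S but i and j
   are negative, merges f i and f j into one convex function. *)
Lemma alternative (I : finType) (S : {set I}) (f : I -> T -> R) (K : set T) :
  (0 < #|S|)%N -> mix_closed K -> (forall i, i \in S -> mix_convex K (f i)) ->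
  (forall x, K x -> exists2 i, i \in S & 0 <= f i x) ->
  exists lam : I -> R, [/\ forall i, 0 <= lam i, \sum_(i in S) lam i = 1 &
     forall x, K x -> 0 <= \sum_(i in S) lam i * f i x].
Proof.
have [n] := ubnP #|S|; elim: n S f K => // n IH S f K.
rewrite ltnS => S_card S_gt0 K_closed f_convex f_cover.
have [/eqP/cards1P[i S1]|S_ne1] := eqVneq #|S| 1%N.
  exists (fun k => (k == i)%:R); split => [k|//|x Kx]; first by rewrite ler0n.
    by rewrite S1 big_set1 eqxx.
  have [k] := f_cover x Kx; rewrite S1 inE => /eqP -> fk.
  by rewrite big_set1 eqxx mul1r.
have /card_gt0P[i Si] := S_gt0.
have Si_card : #|S :\ i| = #|S|.-1 by rewrite (cardsD1 i S) Si.
have Si_gt0 : (0 < #|S :\ i|)%N.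
  by rewrite Si_card -subn1 subn_gt0 ltn_neqAle eq_sym S_ne1.
have /card_gt0P[j Sj'] := Si_gt0.
have [ji Sj] : j != i /\ j \in S by apply/andP; rewrite -in_setD1.
pose K' := [set x | K x /\ forall k, k \in S :\ i :\ j -> f k x < 0].
have K'_closed : mix_closed K'.
  move=> s x y s01 [Kx fx] [Ky fy]; split => [|k k_rest]; first exact: K_closed.
  have k_in : k \in S by move: k_rest; rewrite !in_setD1 => /and3P[].
  apply: le_lt_trans (f_convex k k_in _ _ _ s01 Kx Ky) _.
  by have := fx k k_rest; have := fy k k_rest; case/andP: s01 => ? ?; nra.
have f_convex' k : k \in S -> mix_convex K' (f k).
  by move=> k_in s x y s01 [Kx _] [Ky _]; exact: f_convex.
have [t t01 t_cover] : exists2 t, 0 <= t <= 1 &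
    forall x, K' x -> 0 <= t * f i x + (1 - t) * f j x.
  apply: alternative2 => //; [exact: f_convex' | exact: f_convex' |].
  move=> x [Kx rest_neg]; have [k k_in fk] := f_cover x Kx.
  have [<-|ki] := eqVneq k i; first by left.
  have [<-|kj] := eqVneq k j; first by right.
  by have := rest_neg k; rewrite !in_setD1 ki kj k_in ltNge fk => /(_ isT).
pose f' k x := if k == j then t * f i x + (1 - t) * f j x else f k x.
have f'_convex k : k \in S :\ i -> mix_convex K (f' k).
  rewrite in_setD1 => /andP[_ k_in]; rewrite /f'; case: (k == j).
    exact: mix_convex_comb t01 (f_convex i Si) (f_convex j Sj).
  exact: f_convex.
have f'_cover x : K x -> exists2 k, k \in S :\ i & 0 <= f' k x.
  move=> Kx; have [K'x|] := pselect (K' x).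
    by exists j => //; rewrite /f' eqxx; exact: t_cover.
  move=> /not_andP[//|/existsNP[k /not_implyP[k_rest /negP]]].
  rewrite -leNgt => fk; exists k; first by move: k_rest; rewrite in_setD1 => /andP[].
  by move: k_rest; rewrite !in_setD1 /f' => /andP[/negbTE ->].
have Si_lt : (#|S :\ i| < n)%N by rewrite Si_card -ltnS prednK.
have [lam' [lam'_ge0 lam'_sum lam'_cover]] :=
  IH (S :\ i) f' K Si_lt Si_gt0 K_closed f'_convex f'_cover.
exact: alternative_merge Si Sj' t01 lam'_ge0 lam'_sum lam'_cover.
Qed.
End Alternative.

Lemma is_dist_mix (R : realType) (Z : finType) (p q : Z -> R) (t : R) :
  0 <= t <= 1 -> is_dist p -> is_dist q ->
  is_dist (fun z => t * p z + (1 - t) * q z).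
Proof.
move=> /andP[t0 t1] [p0 p1] [q0 q1]; split => [z|].
  by rewrite addr_ge0 // mulr_ge0 // ?subr_ge0.
by rewrite big_split /= -!mulr_sumr p1 q1 !mulr1 subrKC.
Qed.

Section LinearProgram.
Variables (R : realType) (X Y : finType) (m : nat).
Variables (Phi : X -> Y -> 'I_m -> R) (a b : 'I_m -> R).

Definition moment (p : X * Y -> R) (i : 'I_m) : R :=
  \sum_(z : X * Y) p z * Phi z.1 z.2 i.

Definition phi_affine (mu : 'I_m -> R) (nu : R) (z : X * Y) : R :=
  \sum_(i < m) Phi z.1 z.2 i * mu i + nu.

Definition lp_cone (mu eta : 'I_m -> R) : Prop :=
  forall i, 0 <= eta i + mu i /\ 0 <= eta i - mu i.

Lemma sum_phi_affine (p : X * Y -> R) mu nu :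
  \sum_z p z * phi_affine mu nu z =
  \sum_(i < m) moment p i * mu i + nu * \sum_z p z.
Proof.
under eq_bigr do rewrite mulrDr mulr_sumr.
rewrite big_split /= exchange_big mulr_sumr; congr (_ + _); last first.
  by apply: eq_bigr => z _; rewrite mulrC.
by apply: eq_bigr => i _; rewrite /moment mulr_suml; apply: eq_bigr => z _; ring.
Qed.

Lemma lp_objE mu eta nu : lp_obj a b mu eta nu =
  \sum_(i < m) (mu i * (2^-1 * (b i + a i)) - eta i * (2^-1 * (b i - a i))) + nu.
Proof.
rewrite /lp_obj !mulr_sumr -sumrB; congr (_ + _); apply: eq_bigr => i _; ring.
Qed.

Lemma lp_obj_le_sum_phi_affine p mu eta nu : Uab Phi a b p -> lp_cone mu eta ->
  lp_obj a b mu eta nu <= \sum_z p z * phi_affine mu nu z.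
Proof.
move=> [[_ p1] p_moment] cone; rewrite sum_phi_affine p1 mulr1 lp_objE lerD2r.
apply: ler_sum => i _; have /andP[ai bi] := p_moment i; have [c1 c2] := cone i.
rewrite -/(moment p i) in ai bi.
have k1 : 0 <= (moment p i - a i) * (eta i + mu i) by rewrite mulr_ge0 // subr_ge0.
have k2 : 0 <= (b i - moment p i) * (eta i - mu i) by rewrite mulr_ge0 // subr_ge0.
nra.
Qed.

Lemma phi_affine_mix t mu1 mu2 nu1 nu2 z :
  phi_affine (fun i => t * mu1 i + (1 - t) * mu2 i) (t * nu1 + (1 - t) * nu2) z =
  t * phi_affine mu1 nu1 z + (1 - t) * phi_affine mu2 nu2 z.
Proof.
rewrite /phi_affine !mulrDr !mulr_sumr addrACA -big_split /=; congr (_ + _).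
by apply: eq_bigr => i _; ring.
Qed.

Lemma lp_obj_mix t mu1 mu2 eta1 eta2 nu1 nu2 :
  lp_obj a b (fun i => t * mu1 i + (1 - t) * mu2 i)
    (fun i => t * eta1 i + (1 - t) * eta2 i) (t * nu1 + (1 - t) * nu2) =
  t * lp_obj a b mu1 eta1 nu1 + (1 - t) * lp_obj a b mu2 eta2 nu2.
Proof.
rewrite !lp_objE !mulrDr !mulr_sumr addrACA -big_split /=; congr (_ + _).
by apply: eq_bigr => i _; ring.
Qed.

Lemma Uab_mix p q t : 0 <= t <= 1 -> Uab Phi a b p -> Uab Phi a b q ->
  Uab Phi a b (fun z => t * p z + (1 - t) * q z).
Proof.
move=> t01 [dp p_moment] [dq q_moment]; split; first exact: is_dist_mix.
move=> i; have /andP[t0 t1] := t01.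
have -> : \sum_z (t * p z + (1 - t) * q z) * Phi z.1 z.2 i =
    t * moment p i + (1 - t) * moment q i.
  by rewrite /moment !mulr_sumr -big_split; apply: eq_bigr => z _ /=; ring.
have /andP[pa pb] := p_moment i; have /andP[qa qb] := q_moment i.
rewrite -/(moment p i) -/(moment q i) in pa pb qa qb.
have t1' : 0 <= 1 - t by rewrite subr_ge0.
have convex_id r : r = t * r + (1 - t) * r by ring.
apply/andP; split; [rewrite {1}(convex_id (a i)) | rewrite {1}(convex_id (b i))];
  by rewrite lerD ?ler_wpM2l.
Qed.

Lemma Uab_avg (I : finType) (w : I -> X * Y -> R) : (0 < #|I|)%N ->
  (forall k, Uab Phi a b (w k)) ->
  Uab Phi a b (fun z => #|I|%:R^-1 * \sum_k w k z).
Proof.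
move=> I_gt0 wU; have n_gt0 : 0 < #|I|%:R^-1 :> R by rewrite invr_gt0 ltr0n.
have avg_const (r : R) : #|I|%:R^-1 * \sum_(k : I) r = r.
  rewrite sumr_const (eq_card (B := I)) //.
  by rewrite -[r *+ _]mulr_natl mulrA mulVf ?mul1r // pnatr_eq0 -lt0n.
have avg_le (u v : I -> R) : (forall k, u k <= v k) ->
    #|I|%:R^-1 * \sum_k u k <= #|I|%:R^-1 * \sum_k v k.
  by move=> uv; rewrite ler_pM2l // ler_sum.
split; first split.
- by move=> z; rewrite mulr_ge0 ?(ltW n_gt0) // sumr_ge0 // => k _; case: (wU k) => -[].
- rewrite -mulr_sumr exchange_big -[RHS](avg_const 1); congr (_ * _).
  by apply: eq_bigr => k _; case: (wU k) => -[_ ->].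
move=> i; rewrite -/(moment _ i).
have -> : moment (fun z => #|I|%:R^-1 * \sum_k w k z) i =
    #|I|%:R^-1 * \sum_k moment (w k) i.
  rewrite /moment exchange_big mulr_sumr; apply: eq_bigr => z _.
  by rewrite -mulrA mulr_suml.
rewrite -{1}(avg_const (a i)) -(avg_const (b i)) !avg_le // => k;
  by have /andP[] := (wU k).2 i.
Qed.

Lemma affine_ge0_slope0 (C g : R) : (forall nu, 0 <= C + nu * g) -> g = 0.
Proof.
move=> C_ge; apply/eqP; apply: contraT => g0.
have := C_ge (- (`|C| + 1) / g); rewrite divfK //.
by have := ler_norm C; lra.
Qed.

Lemma affine_ge0_slope_ge0 (C g : R) :
  (forall nu, 0 <= nu -> 0 <= C + nu * g) -> 0 <= g.
Proof.
move=> C_ge; rewrite leNgt; apply/negP => g_lt0.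
have nu_ge0 : 0 <= (`|C| + 1) / - g.
  by rewrite divr_ge0 ?oppr_ge0 ?(ltW g_lt0) // addr_ge0.
have := C_ge _ nu_ge0; rewrite invrN mulrN mulNr divfK ?lt_eqF //.
by have := ler_norm C; lra.
Qed.

(* The cone of the program is self-dual. *)
Lemma lp_cone_dual (C : R) (al be : 'I_m -> R) (ga : R) :
  (forall mu eta nu, lp_cone mu eta ->
     0 <= C + \sum_(i < m) mu i * al i + \sum_(i < m) eta i * be i + nu * ga) ->
  ga = 0 /\ lp_cone al be.
Proof.
have sum_delta (nu : R) (f : 'I_m -> R) i :
    \sum_(k < m) (if k == i then nu else 0) * f k = nu * f i.
  by rewrite (bigD1 i) //= eqxx big1 ?addr0 // => k /negbTE ->; rewrite mul0r.
move=> C_ge; split.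
  apply: (@affine_ge0_slope0 C) => nu.
  have cone0 : lp_cone (fun=> 0) (fun=> 0) by move=> i; rewrite addr0 subr0.
  by have := C_ge _ _ nu cone0; rewrite !big1 ?addr0 // => i _; rewrite mul0r.
move=> i; split; apply: (@affine_ge0_slope_ge0 C) => nu nu0.
  pose d k := if k == i then nu else 0.
  have cone : lp_cone d d.
    by move=> k; rewrite /d; case: ifP => _; rewrite ?subrr ?addr0 ?lexx ?addr_ge0.
  have := C_ge _ _ 0 cone; rewrite !sum_delta mul0r addr0.
  by rewrite -addrA -mulrDr [al i + _]addrC.
pose d k := if k == i then nu else 0; pose dN k := if k == i then - nu else 0.
have cone : lp_cone dN d.
  by move=> k; rewrite /d /dN; case: ifP => _; rewrite ?subrr ?addNr ?lexx ?opprK ?addr_ge0.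
have := C_ge _ _ 0 cone; rewrite !sum_delta mul0r addr0.
by rewrite mulNr -addrA [- _ + _]addrC -mulrBr.
Qed.

End LinearProgram.

Section Duality.
Variables (R : realType) (X Y : finType) (m : nat).
Variables (Phi : X -> Y -> 'I_m -> R) (a b : 'I_m -> R).

Lemma lagrangianE (w0 s : R) (w c : X * Y -> R) mu eta nu :
  w0 * (s - lp_obj a b mu eta nu) + \sum_z w z * (phi_affine Phi mu nu z - c z) =
  (w0 * s - \sum_z w z * c z)
  + \sum_(i < m) mu i * (moment Phi w i - w0 * (2^-1 * (b i + a i)))
  + \sum_(i < m) eta i * (w0 * (2^-1 * (b i - a i)))
  + nu * (\sum_z w z - w0).
Proof.
under eq_bigr do rewrite mulrBr.
rewrite sumrB sum_phi_affine lp_objE.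
have -> : \sum_(i < m) mu i * (moment Phi w i - w0 * (2^-1 * (b i + a i))) =
    \sum_(i < m) moment Phi w i * mu i - w0 * \sum_(i < m) mu i * (2^-1 * (b i + a i)).
  by rewrite mulr_sumr -sumrB; apply: eq_bigr => i _; ring.
have -> : \sum_(i < m) eta i * (w0 * (2^-1 * (b i - a i))) =
    w0 * \sum_(i < m) eta i * (2^-1 * (b i - a i)).
  by rewrite mulr_sumr; apply: eq_bigr => i _; ring.
rewrite sumrB mulrDr; ring.
Qed.

Lemma Uab_of_lp_cone (w0 : R) (w : X * Y -> R) :
  0 < w0 -> (forall z, 0 <= w z) -> \sum_z w z = w0 ->
  lp_cone (fun i => moment Phi w i - w0 * (2^-1 * (b i + a i)))
          (fun i => w0 * (2^-1 * (b i - a i))) ->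
  Uab Phi a b (fun z => w0^-1 * w z).
Proof.
move=> w0_gt0 w_ge0 w_sum w_cone; split; first split.
- by move=> z; rewrite mulr_ge0 ?invr_ge0 ?(ltW w0_gt0).
- by rewrite -mulr_sumr w_sum (mulVf (lt0r_neq0 w0_gt0)).
move=> i; rewrite -/(moment _ _ i).
have -> : moment Phi (fun z => w0^-1 * w z) i = w0^-1 * moment Phi w i.
  by rewrite /moment mulr_sumr; apply: eq_bigr => z _; rewrite mulrA.
have [lo hi] := w_cone i.
by rewrite ler_pdivlMl // ler_pdivrMl //; apply/andP; split; lra.
Qed.

Section Witness.
Variables (T : Type) (mixT : R -> T -> T -> T) (K : set T).
Variables (Z : {set X * Y}) (c : X * Y -> T -> R) (s : R).
Hypotheses (K_closed : mix_closed mixT K) (K_neq0 : K !=set0).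
Hypothesis c_concave : forall z, z \in Z -> mix_convex mixT K (fun x => - c z x).
Hypothesis lp_obj_bounded : forall x mu eta nu, K x -> lp_cone mu eta ->
  (forall z, z \in Z -> phi_affine Phi mu nu z < c z x) -> lp_obj a b mu eta nu <= s.

Let D := (('I_m -> R) * ('I_m -> R) * R)%type.

Let mixD (t : R) (x y : T * D) : T * D :=
  (mixT t x.1 y.1,
   ((fun i => t * x.2.1.1 i + (1 - t) * y.2.1.1 i,
     fun i => t * x.2.1.2 i + (1 - t) * y.2.1.2 i),
    t * x.2.2 + (1 - t) * y.2.2)).

Let KD : set (T * D) := [set xd | K xd.1 /\ lp_cone xd.2.1.1 xd.2.1.2].

Let F (o : option (X * Y)) (xd : T * D) : R :=
  if o is Some z then phi_affine Phi xd.2.1.1 xd.2.2 z - c z xd.1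
  else s - lp_obj a b xd.2.1.1 xd.2.1.2 xd.2.2.

Let S : {set option (X * Y)} := None |: [set Some z | z in Z].

Let sum_S (G : option (X * Y) -> R) :
  \sum_(o in S) G o = G None + \sum_(z in Z) G (Some z).
Proof.
rewrite big_setU1 /=; last by apply/imsetP => -[].
by rewrite big_imset //= => z1 z2 _ _ [].
Qed.

Let KD_closed : mix_closed mixD KD.
Proof.
move=> t x y t01 [Kx x_cone] [Ky y_cone]; split; first exact: K_closed.
move=> i /=; have [x1 x2] := x_cone i; have [y1 y2] := y_cone i.
have /andP[t0 t1] := t01; have t1' : 0 <= 1 - t by rewrite subr_ge0.
have := mulr_ge0 t0 x1; have := mulr_ge0 t0 x2.
have := mulr_ge0 t1' y1; have := mulr_ge0 t1' y2.
by split; lra.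
Qed.

Let F_convex o : o \in S -> mix_convex mixD KD (F o).
Proof.
move=> o_in t x y t01 [Kx _] [Ky _]; case: o o_in => [z|] /= o_in.
  have z_in : z \in Z.
    by move: o_in; rewrite !inE /= => /imsetP[z' z'_in [->]].
  have := c_concave z_in t01 Kx Ky; rewrite phi_affine_mix; lra.
by rewrite lp_obj_mix; lra.
Qed.

Let F_cover xd : KD xd -> exists2 o, o \in S & 0 <= F o xd.
Proof.
move=> [Kx x_cone].
have [[z z_in Fz]|F_neg] := pselect (exists2 z, z \in Z & 0 <= F (Some z) xd).
  by exists (Some z) => //; rewrite !inE /=; apply/imsetP; exists z.
exists None; first by rewrite !inE.
rewrite /= subr_ge0; apply: lp_obj_bounded Kx x_cone _ => z z_in.
by rewrite -subr_lt0 ltNge; apply/negP => Fz; apply: F_neg; exists z.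
Qed.

Lemma lp_duality_witness : exists p, [/\ Uab Phi a b p,
  forall z, z \notin Z -> p z = 0 & forall x, K x -> \sum_z p z * c z x <= s].
Proof.
have S_gt0 : (0 < #|S|)%N by apply/card_gt0P; exists None; rewrite !inE.
have [lam [lam_ge0 lam_sum lam_F]] := alternative S_gt0 KD_closed F_convex F_cover.
pose w z := if z \in Z then lam (Some z) else 0.
have sum_w : \sum_(z in Z) lam (Some z) = \sum_z w z by rewrite big_mkcond.
have sum_wG (G : X * Y -> R) : \sum_(z in Z) lam (Some z) * G z = \sum_z w z * G z.
  by rewrite big_mkcond; apply: eq_bigr => z _; rewrite /w; case: ifP; rewrite ?mul0r.
have lagr x mu eta nu : K x -> lp_cone mu eta -> 0 <=
    lam None * (s - lp_obj a b mu eta nu) + \sum_z w z * (phi_affine Phi mu nu z - c z x).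
  by move=> Kx cone; have := lam_F (x, ((mu, eta), nu)) (conj Kx cone); rewrite sum_S sum_wG.
have [x0 Kx0] := K_neq0.
have [w_sum w_cone] : \sum_z w z - lam None = 0 /\
    lp_cone (fun i => moment Phi w i - lam None * (2^-1 * (b i + a i)))
            (fun i => lam None * (2^-1 * (b i - a i))).
  apply: (lp_cone_dual (C := lam None * s - \sum_z w z * c z x0)) => mu eta nu cone.
  by rewrite -lagrangianE; exact: lagr.
(* w_sum and lam_sum force lam None = 1/2. *)
have lamN_gt0 : 0 < lam None by move: lam_sum; rewrite sum_S sum_w; lra.
exists (fun z => (lam None)^-1 * w z); split.
- apply: Uab_of_lp_cone => // [z|]; first by rewrite /w; case: ifP.
  by apply/eqP; rewrite -subr_eq0 w_sum.
- by move=> z z_out; rewrite /w (negbTE z_out) mulr0.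
move=> x Kx; under eq_bigr do rewrite -mulrA.
rewrite -mulr_sumr ler_pdivrMl //.
have cone0 : lp_cone (fun _ : 'I_m => 0 : R) (fun=> 0) by move=> i; rewrite addr0 subrr lexx.
have := lagr x _ _ 0 Kx cone0.
by rewrite lagrangianE !(big1 (I := 'I_m)) => [|i _|i _]; rewrite ?mul0r ?addr0 ?subr_ge0.
Qed.

End Witness.

End Duality.

Section Score.
Variables (R : realType) (X Y : finType) (L : (Y -> R) -> Y -> \bar R).
Hypothesis HL : score_function L.

Lemma score_bounded_below :
  exists B : R, forall q y, is_dist q -> (B%:E <= L q y)%E.
Proof.
have [L_ninfty [L_lsc _]] := HL.
have /choice[B B_le] : forall y, exists B : R, forall q, is_dist q -> (B%:E <= L q y)%E.
  by move=> y; apply: lsc_simplex_bounded_below => [q|]; [exact: L_ninfty | exact: L_lsc].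
exists (- \sum_y `|B y|) => q y dq; apply: le_trans (B_le y q dq).
rewrite lee_fin lerNl (bigD1 y) //= -[X in X <= _]addr0 lerD ?sumr_ge0 //.
by rewrite ler_normr lexx orbT.
Qed.

Lemma score_mix_fin (q1 q2 : Y -> R) (t : R) y : 0 <= t <= 1 ->
  is_dist q1 -> is_dist q2 -> L q1 y != +oo%E -> L q2 y != +oo%E ->
  L (fun y' => t * q1 y' + (1 - t) * q2 y') y != +oo%E /\
  fine (L (fun y' => t * q1 y' + (1 - t) * q2 y') y) <=
    t * fine (L q1 y) + (1 - t) * fine (L q2 y).
Proof.
move=> t01 dq1 dq2 L1 L2; have [L_ninfty [_ L_convex]] := HL.
have E1 : L q1 y = (fine (L q1 y))%:E by rewrite fineK // fin_numE L1 L_ninfty.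
have E2 : L q2 y = (fine (L q2 y))%:E by rewrite fineK // fin_numE L2 L_ninfty.
move: (L_convex y q1 q2 t dq1 dq2 t01) (L_ninfty _ y (is_dist_mix t01 dq1 dq2)).
rewrite E1 E2 -!EFinM -EFinD.
by case: (L _ y) => [r| |] //= _; rewrite lee_fin.
Qed.

End Score.

Section Loss.
Variables (R : realType) (X Y : finType) (L : (Y -> R) -> Y -> \bar R).
Variables (h : X -> Y -> R) (p : X * Y -> R).

Lemma ell_EFin (c : X * Y -> R) :
  (forall z, p z != 0 -> L (h z.1) z.2 = (c z)%:E) ->
  ell L h p = (\sum_z p z * c z)%:E.
Proof.
move=> Lc; rewrite /ell -sumEFin; apply: eq_bigr => z _.
by have [->|pz] := eqVneq (p z) 0; rewrite ?mul0e ?mul0r // Lc // EFinM.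
Qed.

Lemma ell_ge (c : X * Y -> R) : (forall z, 0 <= p z) ->
  (forall z, ((c z)%:E <= L (h z.1) z.2)%E) ->
  ((\sum_z p z * c z)%:E <= ell L h p)%E.
Proof.
move=> p_ge0 cL; rewrite /ell -sumEFin; apply: lee_sum => z _.
by rewrite EFinM lee_wpmul2l ?lee_fin.
Qed.

Lemma ell_pinfty z0 : (forall z, 0 <= p z) ->
  (forall z, L (h z.1) z.2 != -oo%E) ->
  0 < p z0 -> L (h z0.1) z0.2 = +oo%E -> ell L h p = +oo%E.
Proof.
move=> p_ge0 L_ninfty pz0 Lz0; rewrite /ell (bigD1 z0) //= Lz0 gt0_muley ?lte_fin //.
apply: addye; rewrite esum_eqNy; apply/existsP => -[z /andP[_ /eqP]].
have [->|pz] := eqVneq (p z) 0; first by rewrite mul0e.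
have pz_gt0 : 0 < p z by rewrite lt0r pz p_ge0.
by case: (L _ _) (L_ninfty z) => [r| |] //= _; rewrite ?gt0_muley ?lte_fin.
Qed.

End Loss.

Section LowerBound.
Variables (R : realType) (X Y : finType) (m : nat).
Variables (Phi : X -> Y -> 'I_m -> R) (a b : 'I_m -> R).
Variables (L : (Y -> R) -> Y -> \bar R) (h : X -> Y -> R) (v : R).
Hypothesis v_max : is_lp_max Phi L h a b v.

Lemma lp_max_le_ell p : Uab Phi a b p -> (v%:E <= ell L h p)%E.
Proof.
have [[mu [eta [nu [[feasible cone] <-]]]] _] := v_max.
move=> Up; have [[p_ge0 _] _] := Up.
apply: le_trans (ell_ge (c := phi_affine Phi mu nu) p_ge0 (fun z => feasible z.1 z.2)).
by rewrite lee_fin; exact: lp_obj_le_sum_phi_affine.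
Qed.

Lemma exists_ell_le_lp_max : score_function L -> is_rule h ->
  exists2 p, Uab Phi a b p & (ell L h p <= v%:E)%E.
Proof.
move=> [L_ninfty _] h_rule.
pose Z := [set z : X * Y | L (h z.1) z.2 != +oo%E]%SET.
have L_fin z : z \in Z -> L (h z.1) z.2 = (fine (L (h z.1) z.2))%:E.
  by rewrite inE => Lz; rewrite fineK // fin_numE Lz L_ninfty.
pose c z (_ : unit) := fine (L (h z.1) z.2).
have c_concave z : z \in Z -> mix_convex (fun _ _ _ => tt) setT (fun x => - c z x).
  by move=> _ t x y _ _ _; rewrite -mulrDl subrKC mul1r.
have feasible x mu eta nu : setT x -> lp_cone mu eta ->
    (forall z, z \in Z -> phi_affine Phi mu nu z < c z x) -> lp_obj a b mu eta nu <= v.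
  move=> _ cone fin_ok; apply: v_max.2; split => // x1 y1.
  have [z_in|] := boolP ((x1, y1) \in Z); last by rewrite inE negbK => /eqP ->; rewrite leey.
  by rewrite (L_fin _ z_in) lee_fin; exact: ltW (fin_ok _ z_in).
have [p [Up p_out p_le]] := lp_duality_witness (fun _ _ _ _ _ _ => I) (ex_intro _ tt I)
  c_concave feasible.
exists p => //.
rewrite (ell_EFin (c := c^~ tt)).
  by rewrite lee_fin; exact: p_le.
by move=> z pz; apply: L_fin; apply: contraLR pz => /p_out ->; rewrite negbK.
Qed.

End LowerBound.

Lemma ereal_lt_between (R : realFieldType) (x y : \bar R) :
  (x < y)%E -> exists s : R, (x < s%:E < y)%E.
Proof.
case: x y => [x| |] [y| |] //= xy.
- by exists ((x + y) / 2); rewrite !lte_fin in xy *; apply/andP; split; lra.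
- by exists (x + 1); rewrite lte_fin ltry andbT; lra.
- by exists (y - 1); rewrite lte_fin ltNyr; lra.
- by exists 0; rewrite ltNyr ltry.
Qed.

Definition Usupport (R : realType) (X Y : finType) (U : set (X * Y -> R)) :
  {set X * Y} := [set z | `[< exists2 p, U p & p z != 0 >]].

Lemma Usupport_out (R : realType) (X Y : finType) (U : set (X * Y -> R)) p z :
  U p -> z \notin Usupport U -> p z = 0.
Proof.
by move=> Up; apply: contraNeq => pz; rewrite inE; apply/asboolP; exists p.
Qed.

Section Minimax.
Variables (R : realType) (X Y : finType) (m : nat).
Variables (Phi : X -> Y -> 'I_m -> R) (a b : 'I_m -> R).
Variables (L : (Y -> R) -> Y -> \bar R).
Hypothesis HL : score_function L.

Local Notation U := (Uab Phi a b).
Local Notation Z := (Usupport U).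

Lemma Uab_full_support : U !=set0 -> exists2 pb, U pb & forall z, z \in Z -> 0 < pb z.
Proof.
move=> [p0 Up0].
have /choice[w w_spec] : forall k : X * Y, exists p, U p /\ (k \in Z -> 0 < p k).
  move=> k; have [|k_out] := boolP (k \in Z); last first.
    by exists p0; split => //; rewrite (negbTE k_out).
  rewrite inE => /asboolP[p Up pk]; exists p; split => // _.
  by rewrite lt0r pk; case: Up => -[p_ge0 _] _; exact: p_ge0.
have XY_gt0 : (0 < #|{: X * Y}|)%N.
  apply/card_gt0P; have [[_ p1] _] := Up0; apply/existsP/negP => /pred0P none.
  by move: p1; rewrite big_pred0 // => /eqP; rewrite eq_sym oner_eq0.
exists (fun z => #|{: X * Y}|%:R^-1 * \sum_k w k z).
  by apply: Uab_avg => // k; case: (w_spec k).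
move=> z z_in; rewrite mulr_gt0 ?invr_gt0 ?ltr0n // (bigD1 z) //=.
rewrite ltr_pwDl ?sumr_ge0 //; first by case: (w_spec z) => _; apply.
by move=> k _; case: (w_spec k) => -[[]].
Qed.

Definition mix_rule (t : R) (h1 h2 : X -> Y -> R) : X -> Y -> R :=
  fun x y => t * h1 x y + (1 - t) * h2 x y.

Definition finite_rules (Z' : {set X * Y}) : set (X -> Y -> R) :=
  [set h | is_rule h /\ forall z, z \in Z' -> L (h z.1) z.2 != +oo%E].

Lemma finite_rules_mix_closed Z' : mix_closed mix_rule (finite_rules Z').
Proof.
move=> t h1 h2 t01 [h1_rule h1_fin] [h2_rule h2_fin]; split => [x|z z_in].
  exact: is_dist_mix.
by have [] := score_mix_fin HL t01 (h1_rule z.1) (h2_rule z.1) (h1_fin z z_in) (h2_fin z z_in).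
Qed.

Lemma finite_rules_fine_convex (Z' : {set X * Y}) z : z \in Z' ->
  mix_convex mix_rule (finite_rules Z') (fun h => fine (L (h z.1) z.2)).
Proof.
move=> z_in t h1 h2 t01 [h1_rule h1_fin] [h2_rule h2_fin].
by have [] := score_mix_fin HL t01 (h1_rule z.1) (h2_rule z.1) (h1_fin z z_in) (h2_fin z z_in).
Qed.

Lemma ell_fine h p : is_rule h -> U p -> (forall z, z \in Z -> L (h z.1) z.2 != +oo%E) ->
  ell L h p = (\sum_z p z * fine (L (h z.1) z.2))%:E.
Proof.
move=> h_rule Up h_fin; apply: ell_EFin => z pz.
have z_in : z \in Z by apply: contraNT pz => /(Usupport_out Up) ->.
by rewrite fineK // fin_numE h_fin // HL.1.
Qed.

Lemma worst_le_neg_lp_obj h mu eta nu : finite_rules Z h -> lp_cone mu eta ->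
  (forall z, z \in Z -> phi_affine Phi mu nu z < - fine (L (h z.1) z.2)) ->
  (worst L U h <= (- lp_obj a b mu eta nu)%:E)%E.
Proof.
move=> [h_rule h_fin] cone h_lt; apply/ereal_supP => _ [p Up <-].
rewrite (ell_fine h_rule Up h_fin) lee_fin lerNr.
apply: le_trans (lp_obj_le_sum_phi_affine nu Up cone) _.
rewrite -sumrN; apply: ler_sum => z _; rewrite -mulrN.
have [z_in|z_out] := boolP (z \in Z); last by rewrite (Usupport_out Up z_out) !mul0r.
by rewrite ler_wpM2l ?(ltW (h_lt z z_in)) //; case: Up => -[].
Qed.

Lemma Hent_pinfty pb : U pb -> (forall z, z \in Z -> 0 < pb z) ->
  ~ (finite_rules Z !=set0) -> Hent L pb = +oo%E.
Proof.
move=> [[pb_ge0 _] _] pb_pos no_fin; apply/eqP; rewrite eq_le leey /=.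
apply/ereal_infP => _ [h h_rule <-].
have [z z_in Lz] : exists2 z, z \in Z & L (h z.1) z.2 = +oo%E.
  apply: contrapT => fin; apply: no_fin; exists h; split => // z z_in.
  by apply/eqP => Lz; apply: fin; exists z.
by rewrite (ell_pinfty pb_ge0 _ (pb_pos z z_in) Lz) // => z'; rewrite HL.1.
Qed.

Lemma Hent_mix_ge (pb p : X * Y -> R) (B s1 dl : R) :
  (forall q y, is_dist q -> (B%:E <= L q y)%E) -> 0 < dl -> dl <= 1 ->
  U pb -> U p -> (forall z, z \in Z -> 0 < pb z) ->
  (forall h, finite_rules Z h -> s1 <= \sum_z p z * fine (L (h z.1) z.2)) ->
  ((dl * B + (1 - dl) * s1)%:E <= Hent L (fun z => (dl * pb z + (1 - dl) * p z)%R))%E.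
Proof.
move=> L_ge_B dl_gt0 dl_le1 Upb Up pb_pos p_ge.
have dl01 : 0 <= dl <= 1 by rewrite (ltW dl_gt0) dl_le1.
have Upd := Uab_mix dl01 Upb Up.
have [[pb_ge0 pb_sum] _] := Upb; have [[p_ge0 _] _] := Up; have [[pd_ge0 _] _] := Upd.
apply/ereal_infP => _ [h h_rule <-].
have [h_fin|] := pselect (forall z, z \in Z -> L (h z.1) z.2 != +oo%E); last first.
  move=> /existsNP[z /not_implyP[z_in /negP/negPn/eqP Lz]].
  rewrite (ell_pinfty pd_ge0 _ _ Lz) ?leey // => [z'|]; first by rewrite HL.1.
  by rewrite ltr_pwDl ?mulr_gt0 ?pb_pos // mulr_ge0 // subr_ge0.
rewrite (ell_fine h_rule Upd h_fin) lee_fin.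
have -> : \sum_z (dl * pb z + (1 - dl) * p z) * fine (L (h z.1) z.2) =
    dl * \sum_z pb z * fine (L (h z.1) z.2) + (1 - dl) * \sum_z p z * fine (L (h z.1) z.2).
  by rewrite !mulr_sumr -big_split; apply: eq_bigr => z _ /=; ring.
rewrite lerD // ler_wpM2l ?(ltW dl_gt0) ?subr_ge0 ?p_ge //.
rewrite -[B]mul1r -pb_sum mulr_suml ler_sum // => z _.
have [z_in|z_out] := boolP (z \in Z); last by rewrite (Usupport_out Upb z_out) !mul0r.
rewrite ler_wpM2l // -lee_fin fineK ?L_ge_B // fin_numE h_fin // HL.1 //.
Qed.

Lemma MRC_dual_witness h s1 : is_MRC L U h -> finite_rules Z !=set0 ->
  (s1%:E < worst L U h)%E -> exists2 p, U p &
    forall h', finite_rules Z h' -> s1 <= \sum_z p z * fine (L (h' z.1) z.2).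
Proof.
move=> [_ h_min] K_neq0 s1_lt.
pose c z (h' : X -> Y -> R) := - fine (L (h' z.1) z.2).
have c_concave z : z \in Z -> mix_convex mix_rule (finite_rules Z) (fun h' => - c z h').
  move=> z_in t h1 h2 t01 K1 K2; rewrite /c !opprK.
  exact: (finite_rules_fine_convex z_in t01 K1 K2).
have lp_obj_le h' mu eta nu : finite_rules Z h' -> lp_cone mu eta ->
    (forall z, z \in Z -> phi_affine Phi mu nu z < c z h') -> lp_obj a b mu eta nu <= - s1.
  move=> h'_fin cone h'_lt; rewrite lerNr; apply: ltW; rewrite -lte_fin.
  apply: lt_le_trans s1_lt (le_trans (h_min h' h'_fin.1) _).
  exact: worst_le_neg_lp_obj.
have [p [Up _ p_le]] :=
  lp_duality_witness (finite_rules_mix_closed (Z' := Z)) K_neq0 c_concave lp_obj_le.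
exists p => // h' h'_fin; have := p_le h' h'_fin.
by rewrite /c; under eq_bigr do rewrite mulrN; rewrite sumrN lerN2.
Qed.

Lemma HentU_ge_dual_bound (B s1 : R) pb p :
  (forall q y, is_dist q -> (B%:E <= L q y)%E) ->
  U pb -> (forall z, z \in Z -> 0 < pb z) -> U p ->
  (forall h, finite_rules Z h -> s1 <= \sum_z p z * fine (L (h z.1) z.2)) ->
  (s1%:E <= HentU L U)%E.
Proof.
move=> L_ge_B Upb pb_pos Up p_ge.
have Hent_le_HentU q : U q -> (Hent L q <= HentU L U)%E.
  by move=> Uq; apply: ereal_sup_ubound; exists q.
have B_le_HentU : (B%:E <= HentU L U)%E.
  apply: le_trans (Hent_le_HentU _ Upb); apply/ereal_infP => _ [h h_rule <-].
  have [[pb_ge0 pb_sum] _] := Upb.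
  have := @ell_ge R X Y L h pb (fun=> B) pb_ge0 (fun z => L_ge_B _ z.2 (h_rule z.1)).
  by rewrite -mulr_suml pb_sum mul1r.
rewrite leNgt; apply/negP => HentU_lt.
have [r Er] : exists r, HentU L U = r%:E.
  move: B_le_HentU HentU_lt; case: (HentU L U) => [r _ _| |]; first by exists r.
    by move=> _; rewrite ltNge leey.
  by rewrite leeNy_eq.
have /andP[B_le_r r_lt_s1] : B <= r < s1 by rewrite -!lee_fin -lte_fin -Er B_le_HentU.
(* Hent of the mixture is at least s1 - dl * (s1 - B) = (s1 + r) / 2 > r. *)
pose dl := (s1 - r) / (2 * (s1 - B)).
have dl_gt0 : 0 < dl by rewrite divr_gt0 //; lra.
have dl_le1 : dl <= 1 by rewrite ler_pdivrMr ?mul1r; lra.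
have dlE : dl * (s1 - B) = (s1 - r) / 2 by rewrite /dl; field; apply/negP => /eqP; lra.
have dl01 : 0 <= dl <= 1 by rewrite (ltW dl_gt0) dl_le1.
have := le_trans (Hent_mix_ge L_ge_B dl_gt0 dl_le1 Upb Up pb_pos p_ge)
  (Hent_le_HentU _ (Uab_mix dl01 Upb Up)).
rewrite Er lee_fin (_ : dl * B + (1 - dl) * s1 = s1 - (s1 - r) / 2); first lra.
by rewrite -dlE; ring.
Qed.

Lemma worst_le_HentU h : U !=set0 -> is_MRC L U h -> (worst L U h <= HentU L U)%E.
Proof.
move=> U_neq0 h_MRC.
have [B L_ge_B] := score_bounded_below HL.
have [pb Upb pb_pos] := Uab_full_support U_neq0.
have [K_neq0|no_fin] := pselect (finite_rules Z !=set0); last first.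
  apply: le_trans (leey _) _; rewrite -(Hent_pinfty Upb pb_pos no_fin).
  by apply: ereal_sup_ubound; exists pb.
rewrite leNgt; apply/negP => /ereal_lt_between[s1 /andP[HentU_lt s1_lt]].
have [p Up p_ge] := MRC_dual_witness h_MRC K_neq0 s1_lt.
have := HentU_ge_dual_bound L_ge_B Upb pb_pos Up p_ge.
by rewrite leNgt HentU_lt.
Qed.

End Minimax.

Theorem theorem3 (R : realType) (X Y : finType) (m : nat)
  (HX : (0 < #|X|)%N) (HY : (0 < #|Y|)%N)
  (L : (Y -> R) -> Y -> \bar R) (HL : score_function L)
  (Phi : X -> Y -> 'I_m -> R) (a b : 'I_m -> R)
  (HU : Uab Phi a b !=set0)
  (h : X -> Y -> R) (Hh : is_MRC L (Uab Phi a b) h)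
  (Rlow : R) (HRlow : is_lp_max Phi L h a b Rlow)
  (pstar : X * Y -> R) (Hp : Uab Phi a b pstar) :
  ((Rlow%:E <= ell L h pstar)%E /\ (ell L h pstar <= HentU L (Uab Phi a b))%E)
  /\ ((forall p, Uab Phi a b p -> (Hent L p <= Hent L pstar)%E) ->
        ell L h pstar = HentU L (Uab Phi a b))
  /\ ((forall p, Uab Phi a b p -> (ell L h pstar <= ell L h p)%E) ->
        ell L h pstar = Rlow%:E).
Proof.
have Rlow_le : (Rlow%:E <= ell L h pstar)%E := lp_max_le_ell HRlow Hp.
have ell_le_HentU : (ell L h pstar <= HentU L (Uab Phi a b))%E.
  apply: le_trans (worst_le_HentU HL HU Hh).
  by apply: ereal_sup_ubound; exists pstar.
split=> //; split=> [Hmax|Hmin]; apply/eqP; rewrite eq_le.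
  rewrite ell_le_HentU /=; apply: le_trans (_ : Hent L pstar <= _)%E.
    by apply: ge_ereal_sup => _ [p Up <-]; exact: Hmax.
  by apply: ereal_inf_lbound; exists h => //; exact: Hh.1.
rewrite Rlow_le andbT.
have [p Up ell_le] := exists_ell_le_lp_max HRlow HL Hh.1.
exact: le_trans (Hmin p Up) ell_le.
Qed.
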